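(* Consider the one-ported gather/scatter tree model described in the context, with arbitrary block sizes $m_i\ge0$ and arbitrary parameters $\alpha_{ij},\beta_{ij},\gamma_i\ge 0$. For a nonempty set $P\subseteq\{0,\dots,p-1\}$ and $r\in P$ let $\mathrm{OPT}(P,r)$ be the minimum completion time of a communication tree on $P$ with root $r$. Then $\mathrm{OPT}(\{q\},q)=0$ for every $q$, and for $|P|\ge 2$, \[ \mathrm{OPT}(P,r)=\min\Big\{\ \min_{r'\in P\setminus\{r\}}\big[\max(\gamma_r m_r,\mathrm{OPT}(P\setminus\{r\},r'))+\alpha_{r'r}+\beta_{r'r}\mathrm{Size}(P\setminus\{r\})\big],\ \ \min_{(R,\bar R),\,r'\in\bar R}\big[\max(\mathrm{OPT}(R,r),\mathrm{OPT}(\bar R,r'))+\alpha_{r'r}+\beta_{r'r}\mathrm{Size}(\bar R)\big]\Big\}, \] where the second minimum ranges over all partitions $P=R\cup\bar R$ into disjoint sets with $r\in R$, $|R|\ge 2$, $\bar R\neq\emptyset$, and over $r'\in\bar R$. (That is, optimal trees have optimal substructure.)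
   Context: There are $p$ processors $0,\dots,p-1$; processor $i$ has a data block of size $m_i\ge 0$. For a set $R$ of processors, $\mathrm{Size}(R)=\sum_{i\in R}m_i$. For every ordered pair of distinct processors $i,j$ there are a start-up latency $\alpha_{ij}\ge 0$ and a time per unit $\beta_{ij}\ge 0$, and each processor $i$ has a local copy cost $\gamma_i\ge0$ per unit. A communication tree on a nonempty finite set $R$ of processors with root $r\in R$ is either the trivial tree (only when $R=\{r\}$), or consists of the root $r$ together with a finite sequence of entries $(E_0,\dots,E_j)$ in which exactly one entry is a special ''local copy'' marker and every other entry $E_t$ is a communication tree on a set $R_t$ with root $r_t$, there is at least one such tree entry, and the sets $\{r\}$ and the $R_t$ partition $R$. Completion time (one-ported): the trivial tree has cost $0$; otherwise with $c_{-1}=0$, $c_t=c_{t-1}+\gamma_r m_r$ if $E_t$ is the local copy marker and $c_t=\max(c_{t-1},\mathrm{cost}(E_t))+\alpha_{r_t r}+\beta_{r_t r}\,\mathrm{Size}(R_t)$ if $E_t$ is a tree on $R_t$ with root $r_t$; $\mathrm{cost}(T)=c_j$. *)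

From Stdlib Require List.
From HB Require Import structures.
From mathcomp Require Import classical_sets reals.
From mathcomp Require Import all_boot all_order all_algebra.
Set Implicit Arguments. Unset Strict Implicit. Unset Printing Implicit Defensive.
Import Order.TTheory GRing.Theory Num.Theory.
Local Open Scope ring_scope.

(* A (syntactic) communication tree: a root label and a list of entries;
   [None] is the "local copy" marker, [Some T] a subtree entry.
   The trivial tree is [CNode r [::]]. *)
Inductive ctree (p : nat) : Type :=
  CNode : 'I_p -> seq (option (ctree p)) -> ctree p.

Definition troot p (T : ctree p) : 'I_p := let: CNode r _ := T in r.

Definition subtrees p (es : seq (option (ctree p))) : seq (ctree p) :=
  pmap id es.

Fixpoint tset p (T : ctree p) : {set 'I_p} :=
  let: CNode r es := T in
  r |: (fix go (l : seq (option (ctree p))) : {set 'I_p} :=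
          match l with
          | [::] => set0
          | None :: l' => go l'
          | Some T' :: l' => tset T' :|: go l'
          end) es.

Definition is_marker p (E : option (ctree p)) : bool :=
  if E is None then true else false.

Inductive tree_on (p : nat) : {set 'I_p} -> 'I_p -> ctree p -> Prop :=
| trivial_on (r : 'I_p) : tree_on [set r] r (CNode r [::])
| node_on (R : {set 'I_p}) (r : 'I_p) (es : seq (option (ctree p))) :
    count (@is_marker p) es = 1%N ->
    (0 < size (subtrees es))%N ->
    (forall T, List.In (Some T) es -> tree_on (tset T) (troot T) T) ->
    R = r |: \bigcup_(T <- subtrees es) tset T ->
    (forall T, List.In T (subtrees es) -> r \notin tset T) ->
    (forall i j, (i < j < size (subtrees es))%N ->
       [disjoint tset (nth (CNode r [::]) (subtrees es) i)
               & tset (nth (CNode r [::]) (subtrees es) j)]) ->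
    tree_on R r (CNode r es).

Section Model.
Variables (R : realType) (p : nat) (m : 'I_p -> R)
          (alpha beta : 'I_p -> 'I_p -> R) (gamma : 'I_p -> R).

Definition Size (S : {set 'I_p}) : R := \sum_(i in S) m i.

Fixpoint cost (T : ctree p) : R :=
  let: CNode r es := T in
  (fix go (c : R) (l : seq (option (ctree p))) : R :=
     match l with
     | [::] => c
     | None :: l' => go (c + gamma r * m r) l'
     | Some T' :: l' =>
         go (Num.max c (cost T') + alpha (troot T') r
               + beta (troot T') r * Size (tset T')) l'
     end) 0 es.

(* OPT(P, r): minimum completion time over communication trees on P rooted at r
   (taken as the infimum of the (finite, nonempty) set of achievable costs). *)
Definition OPT (P : {set 'I_p}) (r : 'I_p) : R :=
  inf [set c | exists T, tree_on P r T /\ c = cost T]%classic.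

End Model.

(* Given a tree on P (|P| >= 2) rooted at r, moving its local copy to the front
   never increases the cost, because every later step is monotone and
   1-Lipschitz in the running completion time.  So we may assume the last entry
   is a subtree T'; removing it leaves either the bare local copy, giving the
   first kind of candidate, or a tree on Q = P minus the processors of T' with
   |Q| >= 2, giving the second kind.  Hence every tree costs at least some
   candidate.  Conversely, grafting optimal trees for the two smaller sets
   realises every candidate exactly.  By strong induction on |P|, optimal trees
   exist and OPT(P, r) is the least of the finitely many candidates. *)

From HB Require Import structures.
From mathcomp Require Import classical_sets reals.
From mathcomp Require Import all_boot all_order all_algebra.
From mathcomp Require Import lra zify.
Import Order.TTheory GRing.Theory Num.Theory.
Local Open Scope ring_scope.
Set Implicit Arguments. Unset Strict Implicit.

Lemma In_rcons (T : Type) (s : seq T) x y :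
  List.In y (rcons s x) <-> List.In y s \/ y = x.
Proof. by rewrite -cats1 List.in_app_iff /=; intuition. Qed.

Lemma allP_In (T : Type) (a : pred T) s :
  all a s <-> (forall x, List.In x s -> a x).
Proof.
elim: s => [|x s IH] //=; split => [/andP[ax /IH H] y [<-|/H]|H] //.
by apply/andP; split; [apply: H; left | apply/IH => y ys; apply: H; right].
Qed.

Lemma pairwise_map_nth (T U : Type) (rel : rel U) (f : T -> U) x0 s :
  pairwise rel (map f s) <->
  (forall i j, (i < j < size s)%N -> rel (f (nth x0 s i)) (f (nth x0 s j))).
Proof.
split=> [/(pairwiseP (f x0)) H i j /andP[ij js] | H].
  have is_ : (i < size s)%N by apply: ltn_trans js.
  by rewrite -!(nth_map x0 (f x0)) //; apply: H; rewrite ?inE ?size_map.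
apply/(pairwiseP (f x0)) => i j; rewrite !inE size_map => is_ js ij.
by rewrite !(nth_map x0) //; apply: H; rewrite ij.
Qed.

Section Trees.
Variable p : nat.
Implicit Types (P Q S : {set 'I_p}) (r : 'I_p) (T : ctree p)
  (es l : seq (option (ctree p))).

Definition parts r es : seq {set 'I_p} := [set r] :: map (@tset p) (subtrees es).

Lemma subtrees_rcons l E :
  subtrees (rcons l E) = if E is Some T then rcons (subtrees l) T else subtrees l.
Proof.
by rewrite /subtrees -cats1 pmap_cat; case: E => [T|] /=; rewrite ?cats1 ?cats0.
Qed.

Lemma parts_rcons r l T : parts r (rcons l (Some T)) = rcons (parts r l) (tset T).
Proof. by rewrite /parts subtrees_rcons map_rcons. Qed.

Lemma tset_node r es : tset (CNode r es) = \bigcup_(A <- parts r es) A.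
Proof.
rewrite /parts big_cons big_map /=; congr (_ :|: _).
by elim: es => [|[T|] es IH] /=; rewrite ?big_nil // /subtrees /= big_cons IH.
Qed.

Lemma troot_in T : troot T \in tset T.
Proof. by case: T => r es; rewrite tset_node /parts big_cons setU11. Qed.

Definition wf_node P r es := [/\ count (@is_marker p) es = 1%N,
  (0 < size (subtrees es))%N,
  forall T, List.In (Some T) es -> tree_on (tset T) (troot T) T,
  pairwise (fun A B : {set 'I_p} => [disjoint A & B]) (parts r es) &
  P = \bigcup_(A <- parts r es) A].

Lemma wf_node_tree_on P r es : wf_node P r es -> tree_on P r (CNode r es).
Proof.
case=> hcount hsub htrees; rewrite /parts pairwise_cons => /andP[hr hdisj] ->.
apply: node_on => //.
- by rewrite big_cons big_map.
- by move: hr; rewrite all_map => /allP_In hr T /hr /=; rewrite disjoints1.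
- exact: (pairwise_map_nth _ _ (CNode r [::]) _).1 hdisj.
Qed.

Lemma tree_on_wf_node P r T : tree_on P r T -> (1 < #|P|)%N ->
  exists2 es, T = CNode r es & wf_node P r es.
Proof.
case=> [r0|P0 r0 es hcount hsub htrees -> hr hdisj]; first by rewrite cards1.
move=> _; exists es => //; split => //.
  rewrite /parts pairwise_cons; apply/andP; split.
    by rewrite all_map; apply/allP_In => T0 /hr; rewrite /= disjoints1.
  exact/(pairwise_map_nth _ _ (CNode r0 [::])).
by rewrite /parts big_cons big_map.
Qed.

Lemma tree_on_tset P r T : tree_on P r T -> tset T = P /\ troot T = r.
Proof.
case=> [r0|P0 r0 es _ _ _ -> _ _]; split => //; first by rewrite /= setU0.
by rewrite tset_node /parts big_cons big_map.
Qed.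

Lemma wf_node_card P r es : wf_node P r es -> (1 < #|P|)%N.
Proof.
case=> _ + _ + ->; rewrite /parts; case: (subtrees es) => [|T s] // _.
rewrite pairwise_cons /= disjoints1 => /andP[/andP[rT _] _].
have neq_rT : r != troot T by apply: contraNneq rT => ->; exact: troot_in.
have sub : [set r; troot T] \subset
           [set r] :|: \bigcup_(A <- tset T :: map (@tset p) s) A.
  by rewrite setUS // big_cons sub1set inE troot_in.
by rewrite big_cons (leq_trans _ (subset_leq_card sub)) // cards2 neq_rT.
Qed.

Lemma count_marker_rcons_Some l T :
  count (@is_marker p) (rcons l (Some T)) = count (@is_marker p) l.
Proof. by rewrite -cats1 count_cat addn0. Qed.

Lemma wf_node_graft Q S r s l T : wf_node Q r l -> tree_on S s T ->
  [disjoint Q & S] -> wf_node (Q :|: S) r (rcons l (Some T)).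
Proof.
case=> hcount hsub htrees hdisj hQ hT QS; have [eS es] := tree_on_tset hT.
split.
- by rewrite count_marker_rcons_Some.
- by rewrite subtrees_rcons size_rcons.
- by move=> T0 /In_rcons[/htrees //|[->]]; rewrite eS es.
- rewrite parts_rcons pairwise_rcons hdisj andbT eS.
  by apply/allP => A hA; apply: disjointWl QS; rewrite hQ bigcup_seq bigcup_sup.
- by rewrite parts_rcons -cats1 big_cat big_seq1 hQ eS.
Qed.

Lemma wf_node_prune P r l T : wf_node P r (rcons l (Some T)) ->
  let Q := \bigcup_(A <- parts r l) A in
  [/\ tree_on (tset T) (troot T) T, P = Q :|: tset T, [disjoint Q & tset T],
      count (@is_marker p) l = 1%N &
      (0 < size (subtrees l))%N -> wf_node Q r l].
Proof.
case; rewrite count_marker_rcons_Some parts_rcons pairwise_rcons.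
move=> hcount _ htrees /andP[hT hdisj] hP Q; split => //.
- by apply: htrees; apply/In_rcons; right.
- by rewrite hP -cats1 big_cat big_seq1.
- rewrite disjoint_sym /Q bigcup_seq; apply: bigcup_disjoint => A /(allP hT).
  by rewrite disjoint_sym.
- by split=> // T0 hT0; apply: htrees; apply/In_rcons; left.
Qed.

Lemma wf_node_marker_front P r l :
  wf_node P r (rcons l None) -> wf_node P r (None :: l).
Proof.
case=> hcount; rewrite /parts subtrees_rcons => hsub htrees hdisj hP.
split => //; last by move=> T0 [//|hT0]; apply: htrees; apply/In_rcons; left.
by move: hcount; rewrite -cats1 count_cat /=; lia.
Qed.

Lemma marker_only l : size (subtrees l) = 0%N -> count (@is_marker p) l = 1%N ->
  l = [:: None].
Proof. by case: l => [|[T|] [|[T'|] l]] //= _; lia. Qed.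

End Trees.

Section Costs.
Variables (R : realType) (p : nat) (m : 'I_p -> R)
          (alpha beta : 'I_p -> 'I_p -> R) (gamma : 'I_p -> R).
Hypotheses (hm : forall i, 0 <= m i)
    (halpha : forall i j, 0 <= alpha i j)
    (hbeta : forall i j, 0 <= beta i j)
    (hgamma : forall i, 0 <= gamma i).

Local Notation cost := (cost m alpha beta gamma).
Local Notation OPT := (OPT m alpha beta gamma).
Local Notation Size := (Size m).
Implicit Types (P Q S : {set 'I_p}) (r : 'I_p) (T : ctree p)
  (es l : seq (option (ctree p))).

Definition cost_step (r : 'I_p) (c : R) (E : option (ctree p)) : R :=
  if E is Some T then
    Num.max c (cost T) + alpha (troot T) r + beta (troot T) r * Size (tset T)
  else c + gamma r * m r.

Lemma costE r es : cost (CNode r es) = foldl (cost_step r) 0 es.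
Proof. by rewrite /=; elim: es 0 => [|[T|] es IH] c //=; rewrite IH. Qed.

Lemma cost_rcons_Some r l T :
  cost (CNode r (rcons l (Some T))) = Num.max (cost (CNode r l)) (cost T)
    + alpha (troot T) r + beta (troot T) r * Size (tset T).
Proof. by rewrite !costE foldl_rcons. Qed.

Lemma cost_rcons_None r l :
  cost (CNode r (rcons l None)) = cost (CNode r l) + gamma r * m r.
Proof. by rewrite !costE foldl_rcons. Qed.

Lemma Size_ge0 S : 0 <= Size S.
Proof. exact: sumr_ge0. Qed.

Lemma le_foldl_cost_step r l : {homo foldl (cost_step r) ^~ l : c d / c <= d}.
Proof.
elim: l => [|[T|] l IH] c d cd //=; apply: IH; rewrite ?lerD2r //.
exact: le_max2.
Qed.

Lemma foldl_cost_step_ge r l c : c <= foldl (cost_step r) c l.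
Proof.
elim: l c => [|[T|] l IH] c //=; apply: le_trans (IH _).
  have step_ge0 : 0 <= alpha (troot T) r + beta (troot T) r * Size (tset T).
    by rewrite addr_ge0 // mulr_ge0 // Size_ge0.
  by rewrite -addrA ler_wpDr // le_max lexx.
by rewrite lerDl mulr_ge0.
Qed.

Lemma foldl_cost_step_shift r l c d :
  0 <= d -> foldl (cost_step r) (c + d) l <= foldl (cost_step r) c l + d.
Proof.
move=> d0; elim: l c => [|[T|] l IH] c //=; last by rewrite addrAC IH.
apply: le_trans (IH _); apply: le_foldl_cost_step.
have : Num.max (c + d) (cost T) <= Num.max c (cost T) + d.
  by rewrite addr_maxl le_max2 // lerDl.
lra.
Qed.

Lemma cost_ge0 T : 0 <= cost T.
Proof. by case: T => r es; rewrite costE foldl_cost_step_ge. Qed.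

Lemma cost_marker_front r l :
  cost (CNode r (None :: l)) <= cost (CNode r (rcons l None)).
Proof. by rewrite cost_rcons_None !costE /= foldl_cost_step_shift ?mulr_ge0. Qed.

Lemma wf_node_last_subtree P r es : wf_node P r es ->
  exists l T, wf_node P r (rcons l (Some T)) /\
              cost (CNode r (rcons l (Some T))) <= cost (CNode r es).
Proof.
case/lastP: es => [|l [T|]] hwf; first by case: hwf.
  by exists l, T.
have [hcount hsub _ _ _] := hwf.
have {hcount} : count (@is_marker p) l = 0%N.
  by move: hcount; rewrite -cats1 count_cat /=; lia.
rewrite subtrees_rcons in hsub.
case/lastP: l hwf hsub => [|l [T|]] hwf hsub // hcount.
  exists (None :: l), T; split; first exact: wf_node_marker_front.
  exact: cost_marker_front.
by move: hcount; rewrite -cats1 count_cat /=; lia.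
Qed.

Lemma OPT_le_cost P r T : tree_on P r T -> OPT P r <= cost T.
Proof.
move=> hT; apply: ge_inf; last by exists T.
by exists 0 => _ [T0 [_ ->]]; exact: cost_ge0.
Qed.

Lemma le_OPT P r T0 v : tree_on P r T0 ->
  (forall T, tree_on P r T -> v <= cost T) -> v <= OPT P r.
Proof.
move=> hT0 H; apply: lb_le_inf; first by exists (cost T0), T0.
by move=> _ [T [hT ->]]; exact: H.
Qed.

Lemma OPT_singleton q : OPT [set q] q = 0.
Proof.
apply/le_anti/andP; split; first exact: OPT_le_cost (trivial_on q).
by apply: le_OPT (trivial_on q) _ => T _; exact: cost_ge0.
Qed.

Definition copy_value P r r' : R :=
  Num.max (gamma r * m r) (OPT (P :\ r) r') + alpha r' r + beta r' r * Size (P :\ r).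

Definition split_value P Q r r' : R :=
  Num.max (OPT Q r) (OPT (P :\: Q) r') + alpha r' r + beta r' r * Size (P :\: Q).

Definition candidate P r (v : R) : Prop :=
  (exists2 r', r' \in P :\ r & v = copy_value P r r') \/
  (exists Q r', [/\ Q \subset P, r \in Q, (2 <= #|Q|)%N, P :\: Q != set0 &
                    r' \in P :\: Q] /\ v = split_value P Q r r').

Lemma candidate_le_cost P r T : tree_on P r T -> (1 < #|P|)%N ->
  exists2 v, candidate P r v & v <= cost T.
Proof.
move=> hT hP; have [es -> hwf] := tree_on_wf_node hT hP.
have [l [T' [hwf' le_es]]] := wf_node_last_subtree hwf.
suff [v hv le_v] :
    exists2 v, candidate P r v & v <= cost (CNode r (rcons l (Some T'))).
  by exists v => //; exact: le_trans le_es.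
have [hT' hPQ hQT' hcount hwfQ] := wf_node_prune hwf'.
set Q := \bigcup_(A <- parts r l) A in hPQ hQT' hwfQ.
have PQ : P :\: Q = tset T'.
  by rewrite hPQ setDUl setDv set0U; apply/setDidPl; rewrite disjoint_sym.
rewrite cost_rcons_Some.
case: (posnP (size (subtrees l))) => [/marker_only/(_ hcount) el | hs].
  have Qr : Q = [set r] by rewrite /Q el big_seq1.
  exists (copy_value P r (troot T')).
    by left; exists (troot T') => //; rewrite -Qr PQ troot_in.
  by rewrite /copy_value -Qr PQ el /= add0r !lerD2r le_max2 ?OPT_le_cost.
exists (split_value P Q r (troot T')).
  right; exists Q, (troot T'); split => //; split.
  - by rewrite hPQ subsetUl.
  - by rewrite /Q /parts big_cons setU11.
  - exact: wf_node_card (hwfQ hs).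
  - by rewrite PQ; apply/set0Pn; exists (troot T'); exact: troot_in.
  - by rewrite PQ troot_in.
rewrite /split_value PQ !lerD2r le_max2 // OPT_le_cost //.
exact: wf_node_tree_on (hwfQ hs).
Qed.

Definition OPT_attained P r : Prop := exists2 T, tree_on P r T & cost T = OPT P r.

Lemma candidate_tree P r v : r \in P ->
  (forall S s, s \in S -> (#|S| < #|P|)%N -> OPT_attained S s) ->
  candidate P r v -> exists2 T, tree_on P r T & cost T = v.
Proof.
move=> hr IH [[r' hr' ->] | [Q [r' [[QP rQ Q2 PQ0 r'PQ] ->]]]].
  have [T hT cT] : OPT_attained (P :\ r) r'.
    by apply: IH => //; rewrite [in X in (_ < X)%N](cardsD1 r P) hr.
  have [eS er] := tree_on_tset hT.
  exists (CNode r [:: None; Some T]); last by rewrite /= add0r eS er cT.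
  apply: wf_node_tree_on; split => //.
  - by move=> T0 [//|[[<-]|[]]]; rewrite eS er.
  - by rewrite /= eS disjoints1 setD11.
  - by rewrite /parts /= big_cons big_seq1 eS setD1K.
have [TQ hTQ cTQ] : OPT_attained Q r.
  by apply: IH => //; apply: proper_card; rewrite properE QP -setD_eq0.
have [T' hT' cT'] : OPT_attained (P :\: Q) r'.
  apply: IH => //; apply/proper_card/properP; split; first exact: subsetDl.
  by exists r; rewrite ?inE ?rQ ?(subsetP QP).
have [eS er] := tree_on_tset hT'.
have [l eTQ hwfQ] := tree_on_wf_node hTQ Q2; rewrite eTQ in cTQ.
exists (CNode r (rcons l (Some T'))); last by rewrite cost_rcons_Some cTQ cT' eS er.
have -> : P = Q :|: (P :\: Q) by rewrite -{1}(setID P Q) (setIidPr QP).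
apply/wf_node_tree_on/(wf_node_graft hwfQ hT').
by have := subxx (P :\: Q); rewrite subsetD disjoint_sym => /andP[].
Qed.

Lemma candidate_min P r : r \in P -> (1 < #|P|)%N ->
  exists2 v, candidate P r v & forall w, candidate P r w -> v <= w.
Proof.
move=> hr hP.
(* Candidates are indexed by (r', None) for the local-copy case and by
   (r', Some Q) for a split, so a minimal one exists by finiteness. *)
pose ok (i : 'I_p * option {set 'I_p}) := if i.2 is Some Q then
  [&& Q \subset P, r \in Q, (1 < #|Q|)%N, P :\: Q != set0 & i.1 \in P :\: Q]
  else i.1 \in P :\ r.
pose value (i : 'I_p * option {set 'I_p}) :=
  if i.2 is Some Q then split_value P Q r i.1 else copy_value P r i.1.
have candidateE w : candidate P r w <-> exists2 i, ok i & w = value i.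
  split=> [[[r' hr' ->]|[Q [r' [/and5P hQ ->]]]] | [[r' [Q|]] /= hi ->]].
  - by exists (r', None).
  - by exists (r', Some Q).
  - by right; exists Q, r'; split => //; apply/and5P.
  - by left; exists r'.
have [r' hr'] : exists r', r' \in P :\ r.
  by apply/set0Pn; rewrite -card_gt0; move: hP; rewrite (cardsD1 r P) hr.
have [i hi hmin] := @arg_minP _ _ _ (r', None) ok value hr'.
exists (value i); first by apply/candidateE; exists i.
by move=> w /candidateE[j hj ->]; exact: hmin.
Qed.

Lemma OPT_recurrence P r : r \in P -> (1 < #|P|)%N ->
  (forall S s, s \in S -> (#|S| < #|P|)%N -> OPT_attained S s) ->
  [/\ OPT_attained P r, candidate P r (OPT P r) &
      forall v, candidate P r v -> OPT P r <= v].
Proof.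
move=> hr hP IH; have [v hv hmin] := candidate_min hr hP.
have [T hT cT] := candidate_tree hr IH hv.
have OPT_v : OPT P r = v.
  apply/le_anti; rewrite -{1}cT OPT_le_cost //=.
  apply: le_OPT hT _ => T' hT'; have [w hw le_w] := candidate_le_cost hT' hP.
  exact: le_trans (hmin _ hw) le_w.
by rewrite OPT_v; split => //; exists T; rewrite ?OPT_v.
Qed.

Lemma OPT_attained_all P r : r \in P -> OPT_attained P r.
Proof.
move: {2}#|P| (leqnn #|P|) => n; elim: n P r => [|n IH] P r hn hr.
  by move: hn; rewrite (cardsD1 r P) hr.
case: (leqP #|P| 1) => hP.
  have -> : P = [set r] by apply/eqP; rewrite eq_sym eqEcard sub1set hr cards1.
  by exists (CNode r [::]); rewrite ?OPT_singleton //; exact: trivial_on.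
have [] // := OPT_recurrence hr hP => S s hs hS.
by apply: IH => //; rewrite -ltnS (leq_trans hS).
Qed.

End Costs.

Theorem corollary1 (R : realType) (p : nat) (m : 'I_p -> R)
    (alpha beta : 'I_p -> 'I_p -> R) (gamma : 'I_p -> R)
    (hm : forall i, 0 <= m i)
    (halpha : forall i j, 0 <= alpha i j)
    (hbeta : forall i j, 0 <= beta i j)
    (hgamma : forall i, 0 <= gamma i) :
  let OPT := OPT m alpha beta gamma in
  let Size := Size m in
  (forall q : 'I_p, OPT [set q] q = 0) /\
  (forall (P : {set 'I_p}) (r : 'I_p), r \in P -> (2 <= #|P|)%N ->
     let cand : R -> Prop := fun v =>
       (exists2 r', r' \in P :\ r &
          v = Num.max (gamma r * m r) (OPT (P :\ r) r')
              + alpha r' r + beta r' r * Size (P :\ r))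
       \/
       (exists (Q : {set 'I_p}) (r' : 'I_p),
          [/\ Q \subset P, r \in Q, (2 <= #|Q|)%N, P :\: Q != set0 &
              r' \in P :\: Q] /\
              v = Num.max (OPT Q r) (OPT (P :\: Q) r')
                  + alpha r' r + beta r' r * Size (P :\: Q)) in
     cand (OPT P r) /\ (forall v, cand v -> OPT P r <= v)).
Proof.
split; first exact: OPT_singleton hm halpha hbeta hgamma.
move=> P r hr hP.
have [_ hopt hmin] := OPT_recurrence hm halpha hbeta hgamma hr hP
  (fun S s hs _ => OPT_attained_all hm halpha hbeta hgamma hs).
by split.
Qed.
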